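(* Let $G=(V,E,\omega)$ be a weighted directed graph, let $\lambda_0$ be an eigenvalue of $M_G$, and let $S$ be a $\lambda_0$-structural set of $G$. Let $u^S=(u^S_i)_{i\in S}$ be an eigenvector of the reduced matrix $R_S(G,\lambda_0)$ with eigenvalue $\lambda_0$. Then the recursive relations $$u_i=u^S_i\ \ (i\in S_0=S),\qquad u_\ell=\sum_{j\in S_{k-1}}\frac{\omega(\ell,j)}{\lambda_0-\omega(\ell,\ell)}\,u_j\ \ \text{for all }\ell\in S_k\setminus S_{k-1},\ k\ge 1,$$ uniquely determine a vector $u=(u_i)_{i\in V}$, and $u$ is an eigenvector of $M_G$ associated to $\lambda_0$ whose restriction to $S$ is $u^S$.
   Context: Let $G=(V,E,\omega)$ be a weighted directed graph with vertex set $V=\{1,\dots,n\}$, edge set $E\subset V\times V$ and weight function $\omega:E\to\mathbb{C}$; set $\omega(i,j)=0$ whenever $(i,j)\notin E$. Its weighted adjacency matrix is $M_G=(\omega(i,j))_{i,j\in V}$ (acting on column vectors, so $(M_Gu)_i=\sum_j\omega(i,j)u_j$). A path is a sequence $(i_0,\dots,i_p)$ with $p\ge 1$ and $(i_\ell,i_{\ell+1})\in E$ for $0\le \ell\le p-1$, whose vertices are pairwise distinct except that possibly $i_0=i_p$; if $i_0=i_p$ the path is a cycle, and a cycle with $p=1$ is a loop. For $S\subset V$ write $\overline S=V\setminus S$. Given $\lambda\in\mathbb{C}$, a nonempty set $S\subset V$ is a $\lambda$-structural set of $G$ if (i) every cycle of $G$ that is not a loop contains a vertex of $S$, and (ii)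 $\omega(i,i)\neq\lambda$ for every $i\in\overline S$. A branch of $(G,S)$ is a path $\beta=(i_0,i_1,\dots,i_p)$ whose interior vertices $i_1,\dots,i_{p-1}$ all lie in $\overline S$; $\mathscr B_{ij}$ denotes the set of branches with $i_0=i$ and $i_p=j$. The weight of a branch is $\omega(\beta,\lambda)=\omega(i_0,i_1)\prod_{\ell=1}^{p-1}\frac{\omega(i_\ell,i_{\ell+1})}{\lambda-\omega(i_\ell,i_\ell)}$. For $i,j\in S$ set $R_{ij}(G,S,\lambda)=\sum_{\beta\in\mathscr B_{ij}}\omega(\beta,\lambda)$; the reduced matrix $R_S(G,\lambda)$ is the $S\times S$ matrix with entries $R_{ij}(G,S,\lambda)$, $i,j\in S$. Depth of a vertex (relative to $S$), defined recursively: every $i\in S$ has depth $0$; a vertex $i\in\overline S$ has depth $k\ge1$ iff it has no depth less than $k$ and every $j\neq i$ with $(i,j)\in E$ has depth $<k$. Since $S$ is structural, every vertex has a finite depth. $S_k$ denotes the set of vertices of depth $\le k$. *)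

From HB Require Import structures.
From mathcomp Require Import all_boot all_order all_algebra.
Set Implicit Arguments. Unset Strict Implicit. Unset Printing Implicit Defensive.
Import Order.TTheory GRing.Theory Num.Theory.
Local Open Scope ring_scope.

(* Vertex set V = 'I_n, edge set E : rel 'I_n, weights w : 'I_n -> 'I_n -> C
   (with w i j = 0 when (i,j) is not an edge, imposed as a hypothesis). *)

Section GraphDefs.
Variables (C : numClosedFieldType) (n : nat).
Implicit Types (E : rel 'I_n) (w : 'I_n -> 'I_n -> C) (S : {set 'I_n}).

Definition adjmx w : 'M[C]_n := \matrix_(i, j) w i j.

(* A path (i0, i1, ..., ip) is represented by its first vertex i0 and the
   sequence s = [:: i1; ...; ip].  p >= 1, consecutive pairs are edges, and
   the vertices are pairwise distinct except possibly i0 = ip. *)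
Definition is_gpath E (i0 : 'I_n) (s : seq 'I_n) : bool :=
  [&& (1 <= size s)%N, path E i0 s &
      uniq (i0 :: s) || ((last i0 s == i0) && uniq s)].

Definition is_gcycle E i0 s : bool := is_gpath E i0 s && (last i0 s == i0).

Definition is_gloop E i0 s : bool := is_gcycle E i0 s && (size s == 1%N).

Definition structural E w S (lam : C) : Prop :=
  [/\ S != set0,
      (forall i0 s, is_gcycle E i0 s -> ~~ is_gloop E i0 s ->
         has (fun v => v \in S) (i0 :: s))
    & (forall i, i \notin S -> w i i != lam)].

Definition is_branch E S i0 s : bool :=
  is_gpath E i0 s && all (fun v => v \notin S) (take (size s).-1 s).

Fixpoint tail_weight w (lam : C) (a : 'I_n) (s : seq 'I_n) : C :=
  match s with
  | [::] => 1
  | b :: s' => w a b / (lam - w a a) * tail_weight w lam b s'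
  end.

(* omega(beta, lam) = w(i0,i1) * prod_{l=1}^{p-1} w(i_l,i_{l+1})/(lam - w(i_l,i_l)) *)
Definition branch_weight w (lam : C) (i0 : 'I_n) (s : seq 'I_n) : C :=
  match s with
  | [::] => 1
  | i1 :: s' => w i0 i1 * tail_weight w lam i1 s'
  end.

(* R_ij(G,S,lam): sum over all branches from i to j.  A branch has at most n
   vertices after i0, so it is enumerated exactly once as a k-tuple, k <= n. *)
Definition Rij E w S (lam : C) (i j : 'I_n) : C :=
  \sum_(k < n.+1) \sum_(t : k.-tuple 'I_n | is_branch E S i t && (last i t == j))
     branch_weight w lam i t.

Definition redmx E w S (lam : C) : 'M[C]_#|S| :=
  \matrix_(a, b) Rij E w S lam (enum_val a) (enum_val b).

Fixpoint Sk E S (k : nat) : {set 'I_n} :=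
  match k with
  | 0 => S
  | k'.+1 => Sk E S k' :|:
             [set i | [forall j, ((j != i) && E i j) ==> (j \in Sk E S k')]]
  end.

End GraphDefs.

From HB Require Import structures.
From mathcomp Require Import all_boot all_order all_algebra.
Import Order.TTheory GRing.Theory Num.Theory.
Local Open Scope ring_scope.

Set Implicit Arguments.
Unset Strict Implicit.
Unset Printing Implicit Defensive.

(* Since S meets every cycle that is not a loop, the depth sets S_k exhaust V:
   otherwise, following from each vertex outside the final S_k an edge to
   another such vertex would close a cycle avoiding S.  Hence the recursion
   determines u by induction on depth, and at a vertex of positive depth it is
   exactly the corresponding row of (M_G - lam0) u = 0.  For i in S, unfolding
   the recursion writes each u_j with j outside S as a sum over the paths from
   j that stay outside S until their last vertex, weighted as branch tails;
   substituting this into (M_G u)_i gives (R_S u^S)_i = lam0 u^S_i. *)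

Section SeqSum.
Variables (T : finType) (R : pzSemiRingType).
Implicit Types (P : pred (seq T)) (F : seq T -> R).

Definition seqsum N P F : R := \sum_(k < N) \sum_(t : k.-tuple T | P t) F t.

Lemma big_tuple0 P F :
  \sum_(t : 0.-tuple T | P t) F t = if P [::] then F [::] else 0.
Proof.
rewrite big_mkcond (bigD1 [tuple]) //= big1 ?addr0 // => t.
by rewrite [t]tuple0 => /negP[].
Qed.

Lemma big_tupleS k P F :
  \sum_(t : k.+1.-tuple T | P t) F t =
  \sum_x \sum_(t : k.-tuple T | P (x :: t)) F (x :: t).
Proof.
rewrite pair_big_dep (reindex (fun p : T * k.-tuple T => [tuple of p.1 :: p.2])) //=.
exists (fun t : k.+1.-tuple T => (thead t, [tuple of behead t])) => [[x t] _ | t _].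
  by congr pair; apply: val_inj.
by rewrite [RHS]tuple_eta; apply: val_inj.
Qed.

Lemma seqsumS N P F :
  seqsum N.+1 P F = (if P [::] then F [::] else 0)
    + \sum_x seqsum N (fun t => P (x :: t)) (fun t => F (x :: t)).
Proof.
rewrite /seqsum big_ord_recl big_tuple0 exchange_big.
by congr (_ + _); apply: eq_bigr => k _; rewrite -big_tupleS.
Qed.

Lemma seqsum_widen N P F :
  (forall t, P t -> size t < N)%N -> seqsum N.+1 P F = seqsum N P F.
Proof.
move=> small; rewrite /seqsum big_ord_recr /= [X in _ + X]big_pred0 ?addr0 // => t.
by apply/negP => /small; rewrite size_tuple ltnn.
Qed.

Lemma eq_seqsum N P1 P2 F1 F2 :
  P1 =1 P2 -> (forall t, P1 t -> F1 t = F2 t) -> seqsum N P1 F1 = seqsum N P2 F2.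
Proof.
by move=> eqP12 eqF12; apply: eq_bigr => k _; apply: eq_big => [t | t /eqF12].
Qed.

Lemma seqsum0 N P F : (forall t, ~~ P t) -> seqsum N P F = 0.
Proof. by move=> noP; apply: big1 => k _; apply: big_pred0 => t; apply/negbTE. Qed.

Lemma mulr_seqsumr N P F c : c * seqsum N P F = seqsum N P (fun t => c * F t).
Proof. by rewrite /seqsum mulr_sumr; under eq_bigr do rewrite mulr_sumr. Qed.

Lemma seqsum_partition (I : finType) (A : {set I}) (key : seq T -> I) N P F
    (G : I -> R) :
  \sum_(s in A) seqsum N (fun t => P t && (key t == s)) F * G s
    = seqsum N (fun t => P t && (key t \in A)) (fun t => F t * G (key t)).
Proof.
rewrite /seqsum; under eq_bigr do rewrite mulr_suml.
rewrite exchange_big; apply: eq_bigr => k _.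
under eq_bigr do rewrite mulr_suml big_mkcond.
rewrite exchange_big [RHS]big_mkcond; apply: eq_bigr => t _.
case: (P t); last by rewrite big1.
rewrite -big_mkcondr; case: ifP => keyA.
  rewrite (big_pred1 (key t)) // => s /=.
  by apply/andP/eqP => [[_ /eqP ->] | ->] //; rewrite eqxx.
by rewrite big_pred0 // => s; apply/andP => -[sA /eqP ks]; rewrite ks sA in keyA.
Qed.

End SeqSum.

Section Depth.
Variables (n : nat) (E : rel 'I_n) (S : {set 'I_n}).

Lemma nonloop_cycle_of_fun (A : pred 'I_n) (f : 'I_n -> 'I_n) v :
  (forall y, A y -> A (f y)) -> (forall y, A y -> f y != y) ->
  (forall y, A y -> E y (f y)) -> A v ->
  exists c s, [/\ is_gcycle E c s, ~~ is_gloop E c s & all A (c :: s)].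
Proof.
move=> Af f_neq Ef Av.
have A_iter m : A (iter m f v) by elim: m => //= m /Af.
have [i lt_io loop_i] := trajectP (looping_order f v).
set c := iter i f v in loop_i *; set d := (order f v - i).-1.
have def_o : order f v = (i + d.+1)%N by rewrite /d prednK ?subn_gt0 // subnKC // ltnW.
have cycle_c : iter d.+1 f c = c by rewrite -iterD addnC -def_o.
have uniq_c : uniq (traject f c d.+1).
  by have := orbit_uniq f v; rewrite /orbit def_o trajectD cat_uniq => /and3P [].
have all_A : all A (c :: traject f (f c) d.+1).
  apply/allP => y; rewrite inE => /orP [/eqP -> | /trajectP [m _ ->]].
    exact: A_iter.
  by rewrite -iterSr -iterD; apply: A_iter.
have last_c : last c (traject f (f c) d.+1) = c by rewrite last_traject.
have uniq_s : uniq (traject f (f c) d.+1).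
  by rewrite trajectSr rcons_uniq -iterSr cycle_c -cons_uniq -trajectS.
exists c, (traject f (f c) d.+1); split=> //.
- rewrite /is_gcycle /is_gpath size_traject last_c eqxx uniq_s orbT !andbT /=.
  apply: (sub_in_path (P := A) _ all_A (fpath_traject f c d.+1)).
  by move=> x y Ax _ /eqP <-; apply: Ef.
- apply: contraNN (f_neq c (A_iter i)); rewrite /is_gloop size_traject.
  by case/andP => _ /eqP [d0]; rewrite -[X in _ == X]cycle_c d0 /= ?eqxx.
Qed.

Lemma Sk_mono k m : (k <= m)%N -> Sk E S k \subset Sk E S m.
Proof.
move/subnK <-; elim: (m - k)%N => [|d IH] //.
exact: subset_trans IH (subsetUl _ _).
Qed.

Lemma sub_Sk k : S \subset Sk E S k.
Proof. exact: Sk_mono (leq0n k). Qed.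

Lemma Sk_exact_notin_S k x : x \in Sk E S k.+1 :\: Sk E S k -> x \notin S.
Proof. by rewrite inE => /andP [xNk _]; apply: contra xNk; apply/subsetP/sub_Sk. Qed.

Lemma Sk_exact_edge k x j :
  x \in Sk E S k.+1 :\: Sk E S k -> E x j -> j != x -> j \in Sk E S k.
Proof.
rewrite /= !inE => /andP [/negbTE xNk]; rewrite xNk /= => /forallP succ Exj jx.
by have := succ j; rewrite jx Exj.
Qed.

Lemma Sk_closed k y z :
  y \in Sk E S k -> y \notin S -> E y z -> z != y -> z \in Sk E S k.
Proof.
elim: k => [-> //|k IH] yk1 yS Eyz zy; rewrite /= in_setU.
case: (boolP (y \in Sk E S k)) => [yk | yNk]; first by rewrite IH.
by rewrite (@Sk_exact_edge k y) // inE yNk.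
Qed.

Lemma Sk_depth N x :
  x \in Sk E S N -> x \notin S -> exists k, x \in Sk E S k.+1 :\: Sk E S k.
Proof.
elim: N => [-> //|N IH xN1 xS].
case: (boolP (x \in Sk E S N)) => [xN | xNN]; first exact: IH.
by exists N; rewrite inE xNN.
Qed.

Lemma big_Sk_exact (R : nmodType) k x (F : 'I_n -> R) :
  x \in Sk E S k.+1 :\: Sk E S k -> (forall j, ~~ E x j -> F j = 0) ->
  \sum_(j in Sk E S k) F j = \sum_(j | j != x) F j.
Proof.
move=> xk F0; rewrite [LHS]big_mkcond [RHS]big_mkcond; apply: eq_bigr => j _.
have xNk : x \notin Sk E S k by move: xk; rewrite inE => /andP [].
case: (eqVneq j x) => [-> | jx]; first by rewrite (negbTE xNk).
case: (boolP (E x j)) => [Exj | /F0 ->]; last by case: ifP.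
by rewrite (Sk_exact_edge xk Exj jx).
Qed.

Lemma Sk_stationary : exists N, Sk E S N.+1 = Sk E S N.
Proof.
case: (boolP [exists k : 'I_n.+1, Sk E S k.+1 == Sk E S k]).
  by case/existsP => k /eqP; exists k.
rewrite negb_exists => /forallP grow.
have card_ge k : (k <= n.+1)%N -> (k <= #|Sk E S k|)%N.
  elim: k => // k IH lt_kn; apply: leq_ltn_trans (IH (ltnW lt_kn)) (proper_card _).
  by rewrite properEneq eq_sym (grow (Ordinal lt_kn)) subsetUl.
by have := leq_trans (card_ge _ (leqnn _)) (max_card _); rewrite card_ord ltnn.
Qed.

Lemma Sk_cover (C : numClosedFieldType) (w : 'I_n -> 'I_n -> C) lam :
  structural E w S lam -> exists N, forall v, v \in Sk E S N.
Proof.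
case=> _ meets_cycles _; have [N stN] := Sk_stationary; exists N => v.
apply/contraT => vN.
pose A y := y \notin Sk E S N.
pose f y := odflt y [pick z | [&& z != y, E y z & A z]].
have f_step y : A y -> [&& f y != y, E y (f y) & A (f y)].
  rewrite /A -{1}stN /= in_setU negb_or inE negb_forall => /andP [_ /existsP [z]].
  rewrite negb_imply => /andP [/andP [zy Eyz] zN].
  by rewrite /f; case: pickP => [// | /(_ z)]; rewrite /= zy Eyz /A zN.
have [fA f_neq Ef] : [/\ forall y, A y -> A (f y), forall y, A y -> f y != y
    & forall y, A y -> E y (f y)] by split=> y /f_step /and3P [].
have [c [s [cyc nloop all_A]]] := nonloop_cycle_of_fun fA f_neq Ef vN.
have /hasP [y ys yS] := meets_cycles c s cyc nloop.
by move/allP: all_A => /(_ y ys); rewrite /A (subsetP (sub_Sk N) y yS).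
Qed.

(* After its first edge, a branch ending in [S] is an exit path from its
   second vertex. *)
Definition exit_path x (t : seq 'I_n) : bool :=
  [&& path E x t, uniq (x :: t), all (fun v => v \notin S) (belast x t)
    & last x t \in S].

Lemma exit_path_size x t : exit_path x t -> (size t < n)%N.
Proof.
case/and4P => _ uxt _ _; have := max_card (mem (x :: t)).
by rewrite card_ord (card_uniqP uxt).
Qed.

Lemma exit_path_nil x : exit_path x [::] = (x \in S).
Proof. by []. Qed.

Lemma exit_path_from_S x t : x \in S -> exit_path x t = (t == [::]).
Proof. by case: t => [|y t] xS; rewrite /exit_path /= ?xS ?andbF. Qed.

Lemma exit_path_in_Sk k x t :
  x \in Sk E S k -> exit_path x t -> all (fun v => v \in Sk E S k) (x :: t).
Proof.
elim: t x => [|y t IH] x xk; first by rewrite /= xk.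
case/and4P => /= /andP [Exy pt] /andP [xNyt uyt] /andP [xNS bt] lt.
rewrite xk; apply: IH; last exact/and4P.
by apply: Sk_closed xk xNS Exy _; apply: contraNneq xNyt => ->; apply: mem_head.
Qed.

Lemma exit_path_cons k x j t :
  x \in Sk E S k.+1 :\: Sk E S k ->
  exit_path x (j :: t) = [&& E x j, j != x & exit_path j t].
Proof.
move=> xk; rewrite /exit_path /= (Sk_exact_notin_S xk).
apply/idP/idP => [/and4P [/andP [Exj pt] /andP [xNjt ujt] /andP [_ bt] lt] |].
  by rewrite Exj pt ujt bt lt !andbT; apply: contraNneq xNjt => ->; apply: mem_head.
case/and3P => Exj jx /and4P [pt ujt bt lt]; rewrite Exj pt ujt bt lt !andbT.
have ejt : exit_path j t by apply/and4P.
have /allP in_k := exit_path_in_Sk (Sk_exact_edge xk Exj jx) ejt.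
by apply/negP => /in_k; move: xk; rewrite inE => /andP [/negbTE ->].
Qed.

Lemma branch_to_S_cons i j t :
  i \in S ->
  is_branch E S i (j :: t) && (last i (j :: t) \in S) = E i j && exit_path j t.
Proof.
move=> iS; rewrite /is_branch /is_gpath /exit_path /=.
have -> : take (size t) (j :: t) = belast j t.
  by rewrite lastI -cats1 take_size_cat ?size_belast.
case: (E i j) (path E j t) (last j t \in S) => [] [] [] //=; rewrite ?andbF //.
case: (boolP (all _ _)) => bt; rewrite ?andbF ?andbT //.
apply/idP/idP => [/orP [/andP [_ ujt] | /andP [_ ujt]] // | ujt].
rewrite lastI mem_rcons; set l := last j t.
case: (eqVneq l i) => [-> | li]; first by rewrite ujt orbT.
rewrite inE eq_sym (negbTE li) ujt /= andbT.
rewrite orbF; apply: contraL iS; exact: (allP bt).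
Qed.

End Depth.

Section Expansion.
Variables (C : numClosedFieldType) (n : nat) (E : rel 'I_n).
Variables (w : 'I_n -> 'I_n -> C) (S : {set 'I_n}) (lam : C) (g : 'I_n -> C).
Variable N : nat.
Hypothesis hw : forall i j, ~~ E i j -> w i j = 0.
Hypothesis cover : forall v, v \in Sk E S N.
Hypothesis hrec : forall k l, l \in Sk E S k.+1 :\: Sk E S k ->
  g l = \sum_(j in Sk E S k) w l j / (lam - w l l) * g j.

Lemma rec_notin_S x :
  x \notin S -> g x = \sum_(j | j != x) w x j / (lam - w x x) * g j.
Proof.
move=> xS; have [k xk] := Sk_depth (cover x) xS.
by rewrite (hrec xk) (big_Sk_exact xk) // => j /hw ->; rewrite !mul0r.
Qed.

Definition exit_sum x : C :=
  seqsum n.+1 (exit_path E S x) (fun t => tail_weight w lam x t * g (last x t)).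

Lemma exit_sum_widen x :
  exit_sum x = seqsum n (exit_path E S x) (fun t => tail_weight w lam x t * g (last x t)).
Proof. by apply: seqsum_widen => t /exit_path_size. Qed.

Lemma exit_sum_S x : x \in S -> exit_sum x = g x.
Proof.
move=> xS; rewrite /exit_sum seqsumS exit_path_nil xS mul1r big1 ?addr0 // => j _.
by apply: seqsum0 => t; rewrite (exit_path_from_S _ _ xS).
Qed.

Lemma exit_sumE x : exit_sum x = g x.
Proof.
suff: forall k x, x \in Sk E S k -> exit_sum x = g x by apply; apply: cover.
elim=> [|k IH] {}x; first exact: exit_sum_S.
case: (boolP (x \in Sk E S k)) => [/IH // | xNk xk1].
have xk : x \in Sk E S k.+1 :\: Sk E S k by rewrite inE xNk.
have xNS := Sk_exact_notin_S xk.
rewrite /exit_sum seqsumS exit_path_nil (negbTE xNS) add0r (rec_notin_S xNS).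
rewrite [RHS]big_mkcond; apply: eq_bigr => j _.
rewrite (@eq_seqsum _ _ _ _ (fun t => [&& E x j, j != x & exit_path E S j t]) _
  (fun t => w x j / (lam - w x x) * (tail_weight w lam j t * g (last j t))));
  [| by move=> t; exact: exit_path_cons j t xk | by move=> t _; rewrite /= mulrA].
case: (boolP (E x j)) => Exj; last by rewrite seqsum0 // hw // !mul0r; case: ifP.
case: (eqVneq j x) => [_ | jx]; first exact: seqsum0.
by rewrite -mulr_seqsumr -exit_sum_widen IH // (Sk_exact_edge xk Exj jx).
Qed.

Lemma sum_Rij_mul i :
  i \in S -> \sum_(s in S) Rij E w S lam i s * g s = \sum_j w i j * g j.
Proof.
(* [Rij E w S lam i s] is [seqsum n.+1] of the branches from [i] to [s]. *)
move=> iS; rewrite [LHS](seqsum_partition S (last i)) seqsumS /= add0r.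
apply: eq_bigr => j _.
rewrite (@eq_seqsum _ _ _ _ (fun t => E i j && exit_path E S j t) _
  (fun t => w i j * (tail_weight w lam j t * g (last j t))));
  [| by move=> t; exact: branch_to_S_cons j t iS | by move=> t _; rewrite /= mulrA].
case: (boolP (E i j)) => Eij; last by rewrite seqsum0 // hw // mul0r.
by rewrite -mulr_seqsumr -exit_sum_widen exit_sumE.
Qed.

End Expansion.

Section Solution.
Variables (C : numClosedFieldType) (n : nat) (E : rel 'I_n).
Variables (w : 'I_n -> 'I_n -> C) (S : {set 'I_n}) (lam : C) (uS : 'cV[C]_#|S|).

Definition rec_solution (u : 'cV[C]_n) : Prop :=
  (forall a : 'I_#|S|, u (enum_val a) 0 = uS a 0) /\
  (forall (k : nat) (l : 'I_n), l \in Sk E S k.+1 :\: Sk E S k ->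
     u l 0 = \sum_(j in Sk E S k) w l j / (lam - w l l) * u j 0).

(* The sum over [a] extends [uS] by zero outside [S]. *)
Fixpoint depth_ext (k : nat) : 'I_n -> C :=
  if k is k'.+1 then fun l =>
    if l \in Sk E S k' then depth_ext k' l
    else \sum_(j in Sk E S k') w l j / (lam - w l l) * depth_ext k' j
  else fun i => \sum_(a | enum_val a == i) uS a 0.

Lemma depth_ext_stable k m l :
  l \in Sk E S k -> (k <= m)%N -> depth_ext m l = depth_ext k l.
Proof.
move=> lk /subnK <-; elim: (m - k)%N => [|d IH] //=.
by rewrite (subsetP (Sk_mono E S (leq_addl d k)) _ lk).
Qed.

Lemma rec_solution_depth_ext N :
  (forall v, v \in Sk E S N) -> rec_solution (\col_i depth_ext N i).
Proof.
move=> cover; split=> [a | k l lk].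
  rewrite mxE (depth_ext_stable (k := 0) (enum_valP a) (leq0n N)) /=.
  by rewrite (big_pred1 a) // => b; rewrite /= (inj_eq enum_val_inj).
have [lNk lk1] : l \notin Sk E S k /\ l \in Sk E S k.+1 by move: lk; rewrite inE => /andP.
have lt_kN : (k < N)%N.
  by rewrite ltnNge; apply: contra lNk => /Sk_mono /subsetP; apply.
rewrite mxE (depth_ext_stable lk1 lt_kN) /= (negbTE lNk).
by apply: eq_bigr => j jk; rewrite mxE (depth_ext_stable jk (ltnW lt_kN)).
Qed.

Lemma rec_solution_unique N u1 u2 :
  (forall v, v \in Sk E S N) -> rec_solution u1 -> rec_solution u2 -> u1 = u2.
Proof.
move=> cover [S1 rec1] [S2 rec2].
suff eq_k k l : l \in Sk E S k -> u1 l 0 = u2 l 0.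
  by apply/matrixP => i j; rewrite (ord1 j); apply: (eq_k N).
elim: k l => [l lS | k IH l]; first by rewrite -(enum_rankK_in lS lS) S1 S2.
case: (boolP (l \in Sk E S k)) => [/IH // | lNk lk1].
have lk : l \in Sk E S k.+1 :\: Sk E S k by rewrite inE lNk.
by rewrite (rec1 _ _ lk) (rec2 _ _ lk); apply: eq_bigr => j /IH ->.
Qed.

Lemma rec_solution_eigen N u :
  (forall i j, ~~ E i j -> w i j = 0) -> (forall v, v \in Sk E S N) ->
  (forall i, i \notin S -> w i i != lam) ->
  redmx E w S lam *m uS = lam *: uS -> rec_solution u ->
  adjmx w *m u = lam *: u.
Proof.
move=> hw cover hlam huS [onS rec]; apply/matrixP => i j0; rewrite (ord1 j0) !mxE.
under eq_bigr do rewrite mxE.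
case: (boolP (i \in S)) => iS.
  rewrite -(sum_Rij_mul hw cover rec iS) big_enum_val /=.
  have := congr1 (fun M : 'cV[C]_#|S| => M (enum_rank_in iS i) 0) huS.
  rewrite !mxE -onS (enum_rankK_in iS iS) => <-.
  by apply: eq_bigr => b _; rewrite !mxE (enum_rankK_in iS iS) onS.
have lam_ii : lam - w i i != 0 by rewrite subr_eq0 eq_sym hlam.
rewrite (bigD1 i) //= (eq_bigr (fun j => (lam - w i i) * (w i j / (lam - w i i) * u j 0))).
  by rewrite -mulr_sumr -(rec_notin_S hw cover rec iS) mulrBl addrC subrK.
by move=> j _; rewrite mulrA [_ * (_ / _)]mulrC divfK.
Qed.

End Solution.

Theorem mainTheorem2 (C : numClosedFieldType) (n : nat)
    (E : rel 'I_n) (w : 'I_n -> 'I_n -> C)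
    (hw : forall i j, ~~ E i j -> w i j = 0)
    (lam0 : C) (hlam0 : eigenvalue (adjmx w) lam0)
    (S : {set 'I_n}) (hS : structural E w S lam0)
    (uS : 'cV[C]_#|S|) (huS0 : uS != 0)
    (huS : redmx E w S lam0 *m uS = lam0 *: uS) :
  let rec_rel (u : 'cV[C]_n) :=
    (forall a : 'I_#|S|, u (enum_val a) 0 = uS a 0) /\
    (forall (k : nat) (l : 'I_n), l \in Sk E S k.+1 :\: Sk E S k ->
       u l 0 = \sum_(j in Sk E S k) w l j / (lam0 - w l l) * u j 0) in
  (exists! u : 'cV[C]_n, rec_rel u) /\
  (forall u : 'cV[C]_n, rec_rel u ->
     [/\ u != 0, adjmx w *m u = lam0 *: u &
         forall a : 'I_#|S|, u (enum_val a) 0 = uS a 0]).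
Proof.
move=> rec_rel; have [N cover] := Sk_cover hS; case: hS => _ _ hlam.
have sol := rec_solution_depth_ext w lam0 uS cover.
split.
  exists (\col_i depth_ext E w lam0 uS N i); split=> // u.
  exact: rec_solution_unique cover sol.
move=> u [onS rec]; split=> //.
  apply: contraNneq huS0 => u0; apply/eqP/matrixP => a b.
  by rewrite (ord1 b) -onS u0 !mxE.
exact: rec_solution_eigen hw cover hlam huS (conj onS rec).
Qed.
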